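(* Let $N\ge1$, $K\ge2$ be integers with $K$ even and $N$ divisible by $K$, and let $\alpha\in[0,1)$. Put $K^*=\frac{NK}{2N+K}\left(1-\frac{\alpha}{2-\alpha}\right)$. Let $s\in S$ be a pure strategy such that the number of battlefields $k$ with $s_k>0$ is strictly less than $K^*$. Then $s$ is not used with positive probability in any Nash equilibrium of $\mathcal{B}_\alpha(N,K)$: for every Nash equilibrium $(\sigma^A,\sigma^B)$ one has $\sigma^A(s)=\sigma^B(s)=0$.
   Context: Fix integers $N\ge1$, $K\ge2$ and a real number $\alpha$. The Colonel Blotto game $\mathcal{B}_\alpha(N,K)$ is the two-player simultaneous-move game with players $A,B$, each with pure strategy set $S=\{s\in\{0,1,\ldots,N\}^K:\sum_{k=1}^K s_k=N\}$, in which the payoff of player $i$ at the pure profile $(s^i,s^{-i})$ is $\pi^i(s^i,s^{-i})=\sum_{k=1}^K\big(\mathbf 1[s^i_k>s^{-i}_k]+\tfrac{\alpha}{2}\mathbf 1[s^i_k=s^{-i}_k]\big)$. Mixed strategies are probability distributions on $S$, with expected payoffs under independent randomization; a Nash equilibrium is a mixed profile from which no unilateral deviation raises a player's expected payoff. *)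

From HB Require Import structures.
From mathcomp Require Import all_boot all_order all_algebra.
From mathcomp Require Import reals.
Set Implicit Arguments. Unset Strict Implicit. Unset Printing Implicit Defensive.
Import Order.TTheory GRing.Theory Num.Theory.
Local Open Scope ring_scope.

Definition alloc (N K : nat) := {ffun 'I_K -> 'I_N.+1}.

Definition in_S (N K : nat) (s : alloc N K) : bool :=
  (\sum_(k < K) (s k : nat) == N)%N.

Definition payoff {R : realType} (alpha : R) (N K : nat) (s t : alloc N K) : R :=
  \sum_(k < K) (((s k : nat) > t k)%N%:R
                + alpha / 2%:R * ((s k : nat) == t k)%:R).

Definition mixed {R : realType} (N K : nat) (sigma : {ffun alloc N K -> R}) : Prop :=
  (forall s, 0 <= sigma s) /\ (forall s, ~~ in_S s -> sigma s = 0) /\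
  \sum_s sigma s = 1.

(* Expected payoff of a player using sigma against an opponent using tau
   (independent randomization; the game is symmetric). *)
Definition exp_payoff {R : realType} (alpha : R) (N K : nat)
  (sigma tau : {ffun alloc N K -> R}) : R :=
  \sum_s \sum_t sigma s * tau t * payoff alpha s t.

Definition nash {R : realType} (alpha : R) (N K : nat)
  (sA sB : {ffun alloc N K -> R}) : Prop :=
  mixed sA /\ mixed sB /\
  (forall d, mixed d -> exp_payoff alpha d sB <= exp_payoff alpha sA sB) /\
  (forall d, mixed d -> exp_payoff alpha d sA <= exp_payoff alpha sB sA).

Definition Kstar {R : realType} (alpha : R) (N K : nat) : R :=
  (N * K)%N%:R / (2 * N + K)%N%:R * (1 - alpha / (2%:R - alpha)).

Definition nsupp (N K : nat) (s : alloc N K) : nat :=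
  #|[set k : 'I_K | (0 < s k)%N]|.

From HB Require Import structures.
From mathcomp Require Import all_boot all_order all_algebra.
From mathcomp Require Import reals.
From mathcomp Require Import ring lra zify.
Set Implicit Arguments. Unset Strict Implicit. Unset Printing Implicit Defensive.
Import Order.TTheory GRing.Theory Num.Theory.
Local Open Scope ring_scope.

(* Write N = mK and split the battlefields into two halves of K/2 fields.  The
   2m+1 allocations putting x on every field of the first half and 2m - x on
   every field of the second half (0 <= x <= 2m) put each value 0..2m exactly
   once on each field, so against any pure t their total payoff is at least
   K(2m + alpha/2) - N.  A strategy with n positive fields earns at most
   K alpha/2 + (1 - alpha/2) n against anything, and 2m+1 times this bound is
   below K(2m + alpha/2) - N exactly when n < K*.  Hence the uniform mixture of
   these allocations strictly beats s against every opponent strategy, and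
   moving the mass of s onto that mixture would improve any best response that
   gives s positive weight. *)

Lemma sum_delta (R : pzSemiRingType) (T : finType) (G : T -> R) (v : T) :
  \sum_u (u == v)%:R * G u = G v.
Proof.
rewrite (bigD1 v) //= eqxx mul1r big1 ?addr0 // => u /negbTE ->.
by rewrite mul0r.
Qed.

Lemma sum_wins_ties (R : realDomainType) (a : R) (M j : nat) :
  \sum_(y < M) ((j < y)%N%:R + a * (y == j :> nat)%:R) =
  if (j < M)%N then M%:R - 1 - j%:R + a else 0.
Proof.
elim: M => [|M IH]; first by rewrite big_ord0.
rewrite big_ord_recr /= IH -natr1.
case: (ltngtP j M) => [jM|Mj|->] /=.
- by rewrite ltnS (ltnW jM) mulr0 addr0; lra.
- by rewrite ltnS leqNgt Mj mulr0 !addr0.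
- by rewrite ltnSn mulr1; lra.
Qed.

Lemma sum_wins_ties_ge (R : realDomainType) (a : R) (M j : nat) : a <= 1 ->
  M%:R - 1 - j%:R + a <= \sum_(y < M) ((j < y)%N%:R + a * (y == j :> nat)%:R).
Proof.
move=> a1; rewrite sum_wins_ties; case: ltnP => // Mj.
have : M%:R <= j%:R :> R by rewrite ler_nat.
lra.
Qed.

Lemma payoff_le_nsupp (R : realType) (alpha : R) (N K : nat) (s t : alloc N K) :
  0 <= alpha <= 2%:R ->
  payoff alpha s t <= K%:R * (alpha / 2%:R) + (1 - alpha / 2%:R) * (nsupp s)%:R.
Proof.
move=> /andP[a0 a2].
have -> : K%:R * (alpha / 2%:R) + (1 - alpha / 2%:R) * (nsupp s)%:R =
    \sum_(k < K) (alpha / 2%:R + (1 - alpha / 2%:R) * (if (0 < s k)%N then 1 else 0)) :> R.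
  rewrite big_split /= sumr_const card_ord -mulr_sumr -big_mkcond /= sumr_const.
  by rewrite /nsupp cardsE mulr_natl.
apply: ler_sum => k _; case: posnP => [-> | s_pos].
  by rewrite /= mulr0 addr0 add0r; case: (_ == _); rewrite /= ?mulr1 ?mulr0; lra.
rewrite mulr1; case: eqP => [<- | _]; first by rewrite ltnn /= mulr1 add0r; lra.
by rewrite mulr0 addr0; case: ltnP => _ /=; lra.
Qed.

Lemma mixed_mean_le (R : realType) (N K : nat) (tau : {ffun alloc N K -> R})
    (F : alloc N K -> R) (c : R) :
  mixed tau -> (forall t, in_S t -> F t <= c) -> \sum_t tau t * F t <= c.
Proof.
move=> [tau_ge0 [tau_out tau_sum]] F_le.
rewrite -[leRHS]mul1r -tau_sum mulr_suml; apply: ler_sum => t _.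
by case tS: (in_S t); [rewrite ler_wpM2l ?F_le | rewrite tau_out ?tS // !mul0r].
Qed.

Lemma mixed_mean_ge (R : realType) (N K : nat) (tau : {ffun alloc N K -> R})
    (F : alloc N K -> R) (c : R) :
  mixed tau -> (forall t, in_S t -> c <= F t) -> c <= \sum_t tau t * F t.
Proof.
move=> [tau_ge0 [tau_out tau_sum]] F_ge.
rewrite -[leLHS]mul1r -tau_sum mulr_suml; apply: ler_sum => t _.
by case tS: (in_S t); [rewrite ler_wpM2l ?F_ge | rewrite tau_out ?tS // !mul0r].
Qed.

Section DominatedStrategy.

Variables (R : realType) (alpha : R) (N K : nat).
Implicit Types (sg tau : {ffun alloc N K -> R}) (s u : alloc N K).

Definition payoff_vs tau u : R := \sum_t tau t * payoff alpha u t.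

Lemma exp_payoffE sg tau : exp_payoff alpha sg tau = \sum_u sg u * payoff_vs tau u.
Proof.
apply: eq_bigr => u _; rewrite /payoff_vs big_distrr.
by apply: eq_bigr => t _; rewrite /= mulrA.
Qed.

Variables (M : nat) (dev : 'I_M -> alloc N K).
Hypotheses (M_gt0 : (0 < M)%N) (dev_S : forall x, in_S (dev x)).

Definition move_mass sg s : {ffun alloc N K -> R} :=
  [ffun u => sg u - sg s * (u == s)%:R
             + sg s / M%:R * \sum_(x < M) (u == dev x)%:R].

Lemma sum_move_mass sg s (G : alloc N K -> R) :
  \sum_u move_mass sg s u * G u =
  \sum_u sg u * G u - sg s * G s + sg s / M%:R * \sum_(x < M) G (dev x).
Proof.
transitivity (\sum_u (sg u * G u - sg s * ((u == s)%:R * G u)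
                      + sg s / M%:R * \sum_(x < M) ((u == dev x)%:R * G u))).
  by apply: eq_bigr => u _; rewrite ffunE -big_distrl /=; ring.
rewrite big_split /= sumrB -!mulr_sumr sum_delta exchange_big /=.
by congr (_ + _ * _); apply: eq_bigr => x _; rewrite sum_delta.
Qed.

Lemma mixed_move_mass sg s : mixed sg -> in_S s -> mixed (move_mass sg s).
Proof.
move=> [sg_ge0 [sg_out sg_sum]] sS.
have M_pos : 0 < M%:R :> R by rewrite ltr0n.
split; [|split].
- move=> u; rewrite ffunE; apply: addr_ge0.
    by case: eqVneq => [->|_]; rewrite /= ?mulr1 ?subrr ?mulr0 ?subr0 ?sg_ge0.
  by rewrite mulr_ge0 ?divr_ge0 ?sumr_ge0 ?ler0n.
- move=> u uS; rewrite ffunE sg_out //.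
  have /negbTE -> : u != s by apply: contraNneq uS => ->.
  rewrite big1 ?mulr0 ?subrr ?addr0 // => x _.
  by have /negbTE -> : u != dev x by apply: contraNneq uS => ->.
- have := sum_move_mass sg s (fun _ => 1).
  under eq_bigr do rewrite mulr1; move=> ->; under eq_bigr do rewrite mulr1.
  by rewrite sg_sum sumr_const card_ord mulr1 -mulrA mulVf ?gt_eqF // mulr1 subrK.
Qed.

Lemma best_response_dominated sg tau s :
  mixed sg -> in_S s ->
  (forall d, mixed d -> exp_payoff alpha d tau <= exp_payoff alpha sg tau) ->
  M%:R * payoff_vs tau s < \sum_(x < M) payoff_vs tau (dev x) ->
  sg s = 0.
Proof.
move=> sg_mixed sS sg_best dominated.
have [sg_ge0 _] := sg_mixed.
have := sg_ge0 s; rewrite le0r => /orP[/eqP // | s_pos]; exfalso.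
have M_pos : 0 < M%:R :> R by rewrite ltr0n.
have := sg_best _ (mixed_move_mass sg_mixed sS).
rewrite !exp_payoffE sum_move_mass; apply/negP; rewrite -ltNge -subr_gt0.
have -> : \sum_u sg u * payoff_vs tau u - sg s * payoff_vs tau s
            + sg s / M%:R * \sum_(x < M) payoff_vs tau (dev x)
            - \sum_u sg u * payoff_vs tau u
          = sg s / M%:R * (\sum_(x < M) payoff_vs tau (dev x) - M%:R * payoff_vs tau s).
  by field; rewrite gt_eqF.
by rewrite mulr_gt0 ?divr_gt0 // subr_gt0.
Qed.

End DominatedStrategy.

Section SplitAllocations.

Variables (R : realType) (alpha : R) (N K m h : nat).
Hypotheses (N_eq : N = (m * K)%N) (K_eq : K = (h + h)%N) (h_gt0 : (0 < h)%N).

Definition split_alloc (x : nat) : alloc N K :=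
  [ffun k : 'I_K => inord (if (k < h)%N then x else (2 * m - x)%N)].

Lemma double_m_le_N : (2 * m <= N)%N.
Proof. by rewrite N_eq K_eq; nia. Qed.

Lemma split_allocE x k : (x <= 2 * m)%N ->
  split_alloc x k = (if (k < h)%N then x else (2 * m - x)%N) :> nat.
Proof.
move=> x_le; rewrite ffunE inordK // ltnS.
apply: leq_trans double_m_le_N.
by case: ifP => _; [exact: x_le | exact: leq_subr].
Qed.

Lemma split_alloc_in_S x : (x <= 2 * m)%N -> in_S (split_alloc x).
Proof.
move=> x_le; rewrite /in_S.
under eq_bigr => k _ do rewrite split_allocE //.
rewrite -(big_mkord xpredT (fun k => if (k < h)%N then x else (2 * m - x)%N)).
rewrite (@big_cat_nat _ _ _ h) //; last by rewrite K_eq leq_addr.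
rewrite (@eq_big_nat _ _ _ 0 h _ (fun _ => x)); last by move=> i /andP[_ ->].
rewrite (@eq_big_nat _ _ _ h K _ (fun _ => (2 * m - x)%N)); last first.
  by move=> i /andP[hi _]; rewrite ltnNge hi.
rewrite !sum_nat_const_nat /= subn0 {1}K_eq addnK -mulnDr subnKC // N_eq K_eq.
by apply/eqP; nia.
Qed.

(* On field k, x |-> split_alloc x k is either the identity or x |-> 2m - x. *)
Lemma sum_split_alloc_at (F : nat -> R) (k : 'I_K) :
  \sum_(x < (2 * m).+1) F (split_alloc x k) = \sum_(y < (2 * m).+1) F y.
Proof.
transitivity (\sum_(x < (2 * m).+1) F (if (k < h)%N then x : nat else (2 * m - x)%N)).
  by apply: eq_bigr => x _; rewrite split_allocE // -ltnS.
case: (k < h)%N => //.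
rewrite (reindex_inj rev_ord_inj); apply: eq_bigr => x _ /=.
by rewrite subSS subKn // -ltnS.
Qed.

Lemma sum_payoff_split_alloc_ge (t : alloc N K) : alpha <= 2%:R -> in_S t ->
  K%:R * ((2 * m)%:R + alpha / 2%:R) - N%:R <=
  \sum_(x < (2 * m).+1) payoff alpha (split_alloc x) t.
Proof.
move=> a2 tS; rewrite /payoff exchange_big /=.
have -> : K%:R * ((2 * m)%:R + alpha / 2%:R) - N%:R =
    \sum_(k < K) (((2 * m).+1)%:R - 1 - (t k : nat)%:R + alpha / 2%:R) :> R.
  rewrite big_split /= big_split /= sumrN -natr_sum (eqP tS) !sumr_const card_ord.
  by rewrite -mulr_natl -natr1; lra.
apply: ler_sum => k _.
rewrite (sum_split_alloc_at
  (fun y => ((t k : nat) < y)%N%:R + alpha / 2%:R * (y == t k :> nat)%:R)).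
by apply: sum_wins_ties_ge; lra.
Qed.

Lemma Kstar_gap (n : nat) : 0 <= alpha < 1 -> n%:R < Kstar alpha N K ->
  ((2 * m).+1)%:R * (K%:R * (alpha / 2%:R) + (1 - alpha / 2%:R) * n%:R) <
  K%:R * ((2 * m)%:R + alpha / 2%:R) - N%:R.
Proof.
move=> /andP[a0 a1].
have K_pos : 0 < K%:R :> R by rewrite ltr0n K_eq; lia.
have m_ge0 : 0 <= m%:R :> R by [].
have Kstar_eq : Kstar alpha N K =
    2%:R * m%:R * K%:R * (1 - alpha) / (((2 * m).+1)%:R * (2%:R - alpha)).
  rewrite /Kstar N_eq -natr1 !natrM.
  by field; rewrite !gt_eqF //; nra.
rewrite Kstar_eq ltr_pdivlMr; last by rewrite -natr1 natrM; nra.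
rewrite N_eq -natr1 !natrM; nra.
Qed.

Lemma split_allocs_dominate (s : alloc N K) (tau : {ffun alloc N K -> R}) :
  0 <= alpha < 1 -> (nsupp s)%:R < Kstar alpha N K -> mixed tau ->
  ((2 * m).+1)%:R * payoff_vs alpha tau s <
  \sum_(x < (2 * m).+1) payoff_vs alpha tau (split_alloc x).
Proof.
move=> alpha01 s_small tau_mixed; have /andP[a0 a1] := alpha01.
apply: le_lt_trans (lt_le_trans (Kstar_gap alpha01 s_small) _).
  rewrite ler_wpM2l // /payoff_vs; apply: mixed_mean_le => // t _.
  by apply: payoff_le_nsupp; rewrite a0; lra.
rewrite /payoff_vs exchange_big /=; under eq_bigr do rewrite -mulr_sumr.
by apply: mixed_mean_ge => // t tS; apply: sum_payoff_split_alloc_ge => //; lra.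
Qed.

End SplitAllocations.

Theorem proposition3 (R : realType) (N K : nat) (alpha : R)
  (hN : (1 <= N)%N) (hK : (2 <= K)%N) (hKeven : ~~ odd K) (hKN : (K %| N)%N)
  (ha0 : 0 <= alpha) (ha1 : alpha < 1)
  (s : alloc N K) (hs : in_S s) (hsupp : (nsupp s)%:R < Kstar alpha N K)
  (sA sB : {ffun alloc N K -> R}) (hNE : nash alpha sA sB) :
  sA s = 0 /\ sB s = 0.
Proof.
have [mA [mB [bestA bestB]]] := hNE.
set m := (N %/ K)%N; set h := K./2.
have N_eq : N = (m * K)%N by rewrite divnK.
have K_eq : K = (h + h)%N.
  by rewrite addnn -[LHS]odd_double_half (negbTE hKeven).
have h_gt0 : (0 < h)%N by move: hK; rewrite K_eq; lia.
have alpha01 : 0 <= alpha < 1 by rewrite ha0.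
have dev_S (x : 'I_(2 * m).+1) : in_S (split_alloc N K m h x).
  exact: split_alloc_in_S N_eq K_eq h_gt0 _ (ltn_ord x).
split.
- apply: (best_response_dominated (ltn0Sn _) dev_S mA hs bestA).
  apply: (split_allocs_dominate N_eq K_eq h_gt0 alpha01 hsupp mB).
- apply: (best_response_dominated (ltn0Sn _) dev_S mB hs bestB).
  apply: (split_allocs_dominate N_eq K_eq h_gt0 alpha01 hsupp mA).
Qed.
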